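(* Let $m,k\in\mathbb{N}$ and let $\beta\in\mathbb{C}$ with $\beta,\ 2\beta+2m+2k+2\notin\mathbb{Z}_0^-$. Then \[ {}_3F_2\left[\begin{array}{r} -2m-1,\ 2+2m,\ \beta;\\ -2m-2k-1,\ 2\beta+2m+2k+2;\end{array}1\right]_{2m+1}=\frac{(k+1)(2\beta+2m+2k+1)(2\beta+2k+1)_{2m}\left(2+k\right)_{2m}}{(2m+2k+1)(\beta+k+1)(2k+1)_{2m}\left(2+\beta+k\right)_{2m}}. \]
   Context: $\mathbb{N}=\{1,2,3,\dots\}$, $\mathbb{Z}_0^-=\{0,-1,-2,\dots\}$. For $a\in\mathbb{C}$ and $n\in\mathbb{N}_0$, $(a)_0=1$ and $(a)_n=a(a+1)\cdots(a+n-1)$. For $N\in\mathbb{N}_0$, ${}_3F_2\left[\begin{array}{r} a_1,a_2,a_3;\\ b_1,b_2;\end{array}z\right]_N=\sum_{n=0}^{N}\frac{(a_1)_n(a_2)_n(a_3)_n}{(b_1)_n(b_2)_n}\frac{z^n}{n!}$ (the sum of the first $N+1$ terms), defined whenever $(b_1)_n(b_2)_n\neq0$ for $0\le n\le N$. *)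

From HB Require Import structures.
From mathcomp Require Import all_boot all_order all_algebra.
From mathcomp Require Import complex.
From mathcomp Require Import reals.
Set Implicit Arguments. Unset Strict Implicit. Unset Printing Implicit Defensive.
Import Order.TTheory GRing.Theory Num.Theory.
Local Open Scope ring_scope.

Definition poch {R : ringType} (a : R) (n : nat) : R :=
  \prod_(i < n) (a + i%:R).

Definition notNonPosInt {R : ringType} (a : R) : Prop :=
  forall n : nat, a <> - n%:R.

(* truncated 3F2: sum of the first N+1 terms *)
Definition F32trunc {R : fieldType} (a1 a2 a3 b1 b2 z : R) (N : nat) : R :=
  \sum_(n < N.+1)
    (poch a1 n * poch a2 n * poch a3 n) / (poch b1 n * poch b2 n)
      * z ^+ n / (n`!)%:R.

(* Fix k and beta and let t_m(n) be the n-th summand.  Zeilberger's algorithm gives a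
   rational certificate R and a hypergeometric term T_m(n) such that G_m(n) = R(n) T_m(n)
   satisfies t_{m+1}(n) - r_m t_m(n) = G_m(n+1) - G_m(n), where G_m vanishes at n = 0
   and n = 2m+4.  Summing over n, the sum obeys the same first-order recurrence in m as
   the closed form.  This induction needs beta + j and 2 beta + j nonzero for all j >= 0,
   more than is assumed; but after clearing denominators both sides are polynomials in
   beta that agree at every natural number, hence everywhere. *)

From HB Require Import structures.
From mathcomp Require Import all_boot all_order all_algebra.
From mathcomp Require Import complex reals.
From mathcomp Require Import ring zify.
Import Order.TTheory GRing.Theory Num.Theory.
Local Open Scope ring_scope.

Section Pochhammer.
Variable R : nzRingType.
Implicit Types (x : R) (n j : nat).

Lemma poch0 x : poch x 0 = 1.
Proof. by rewrite /poch big_ord0. Qed.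

Lemma pochS x n : poch x n.+1 = poch x n * (x + n%:R).
Proof. by rewrite /poch big_ord_recr. Qed.

Lemma pochSr x n : poch x n.+1 = x * poch (x + 1) n.
Proof.
rewrite /poch big_ord_recl addr0; congr (_ * _); apply: eq_bigr => i _.
by rewrite /bump /= -nat1r addrA.
Qed.

Lemma pochD x n j : poch x (n + j) = poch x n * poch (x + n%:R) j.
Proof.
elim: j => [|j IH]; first by rewrite addn0 poch0 mulr1.
by rewrite addnS !pochS IH -mulrA natrD addrA.
Qed.

Lemma poch_add2 x n :
  x * (x + 1) * poch (x + 2) n = poch x n * (x + n%:R) * (x + n%:R + 1).
Proof.
have -> : x + 2 = x + 1 + 1 by rewrite -addrA.
by rewrite -mulrA -!pochSr !pochS -natr1 addrA.
Qed.

End Pochhammer.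

Lemma poch_neg_nat_eq0 (R : comNzRingType) j n : (j < n)%N -> poch (- j%:R : R) n = 0.
Proof. by move=> jn; rewrite /poch (bigD1 (Ordinal jn)) //= addNr mul0r. Qed.

Lemma poch_neq0 (R : idomainType) (x : R) n :
  (forall i, (i < n)%N -> x + i%:R != 0) -> poch x n != 0.
Proof. by move=> nz; apply/prodf_neq0 => i _; apply: nz. Qed.

Lemma poch_add2E (F : fieldType) (x : F) n : x * (x + 1) != 0 ->
  poch (x + 2) n = poch x n * (x + n%:R) * (x + n%:R + 1) / (x * (x + 1)).
Proof. by move=> xx1_neq0; rewrite -poch_add2 mulrC mulKf. Qed.

Lemma horner_poch (R : comNzRingType) (p : {poly R}) n x : (poch p n).[x] = poch p.[x] n.
Proof.
by rewrite /poch horner_prod; apply: eq_bigr => i _; rewrite hornerD -polyC_natr hornerC.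
Qed.

Lemma poly_nat_roots_eq0 (R : numDomainType) (p : {poly R}) :
  (forall n : nat, p.[n%:R] = 0) -> p = 0.
Proof.
move=> p_nat; apply/eqP/negP => /negP p_neq0.
suff : (size [seq n%:R : R | n <- iota 0 (size p)] < size p)%N.
  by rewrite size_map size_iota ltnn.
apply: max_poly_roots p_neq0 _ _.
  by apply/allP => _ /mapP[n _ ->]; apply/rootP.
by rewrite map_inj_uniq ?iota_uniq // => i j /eqP; rewrite eqr_nat => /eqP.
Qed.

Lemma notNonPosInt_addn (R : nzRingType) (x : R) n : notNonPosInt x -> x + n%:R != 0.
Proof. by move=> x_notin; rewrite addr_eq0; apply/eqP/x_notin. Qed.

Lemma intrS (R : pzRingType) (z : int) : z%:~R + 1 = (z + 1)%:~R :> R.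
Proof. by rewrite intrD. Qed.

Lemma intrB1 (R : pzRingType) (z : int) : z%:~R - 1 = (z - 1)%:~R :> R.
Proof. by rewrite intrB. Qed.

(* Folds a ring expression built from nat casts into one cast [z%:~R], so that
   [z != 0] can be decided by lia. *)
Ltac int_neq0 :=
  rewrite ?pmulrn;
  repeat progress rewrite -?intrD -?intrM -?intrN ?intrS ?intrB1;
  rewrite intr_eq0; lia.

Ltac solve_neq0 :=
  repeat (apply/andP; split); try done; repeat apply: mulf_neq0;
  try (apply: poch_neq0 => ? ?); try (by rewrite pnatr_eq0 -lt0n fact_gt0); int_neq0.

(* Zeilberger's certificate for the sum over n of [term m n] (defined below), as a
   rational function of a = 2m+1, k and b = beta. *)
Section Certificate.
Context {F : fieldType} (a k b : F).

Definition cert (x : F) : F :=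
  ((12%:R + 32%:R*b + 20%:R*b^+2 + 40%:R*k + 60%:R*k*b + 12%:R*k*b^+2 + 40%:R*k^+2
    + 24%:R*k^+2*b + 12%:R*k^+3 + 32%:R*a + 58%:R*a*b + 22%:R*a*b^+2 + 76%:R*a*k
    + 72%:R*a*k*b + 8%:R*a*k*b^+2 + 50%:R*a*k^+2 + 16%:R*a*k^+2*b + 8%:R*a*k^+3
    + 31%:R*a^+2 + 35%:R*a^+2*b + 6%:R*a^+2*b^+2 + 48%:R*a^+2*k + 22%:R*a^+2*k*b
    + 16%:R*a^+2*k^+2 + 13%:R*a^+3 + 7%:R*a^+3*b + 10%:R*a^+3*k + 2%:R*a^+4) * x
   + (12%:R + 10%:R*b - 6%:R*b^+2 + 20%:R*k + 6%:R*k^+2 + 20%:R*a + 8%:R*a*b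
      - 4%:R*a*b^+2 + 22%:R*a*k + 4%:R*a*k^+2 + 11%:R*a^+2 + a^+2*b + 6%:R*a^+2*k
      + 2%:R*a^+3) * x^+2
   - (3%:R + 11%:R*b + 2%:R*b^+2 + 10%:R*k + 6%:R*k*b + 4%:R*k^+2 + 5%:R*a
      + 7%:R*a*b + 6%:R*a*k + 2%:R*a^+2) * x^+3
   - (3%:R + b + 2%:R*k + 2%:R*a) * x^+4)
  / ((a + 1) * (a + 2) * (b + k + a + 1) * (b + k + a + 2)).

Definition rec_coef : F :=
  (2 * b + a + 2 * k + 2) * (2 * b + a + 2 * k + 1) * (k + a + 1) * (k + a + 2)
  / ((a + 2 * k + 2) * (a + 2 * k + 1) * (b + k + a + 1) * (b + k + a + 2)).

Definition quot_succ (x : F) : F :=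
  (a + 1 + x) * (a + 2 + x) / ((a + 1) * (a + 2)) * (x - a - 2 * k - 2).

Definition quot_term (x : F) : F :=
  (x - a - 2) * (x - a - 1) / ((a + 2) * (a + 1)) * (a + 2 * k + 2) * (a + 2 * k + 1)
  / (x - a - 2 * k - 1) * (2 * b + a + 2 * k + 1 + x) * (2 * b + a + 2 * k + 2 + x)
  / ((2 * b + a + 2 * k + 1) * (2 * b + a + 2 * k + 2)).

Definition quot_base (x : F) : F :=
  (x - a - 2) * (x + a + 1) * (x + b)
  / ((x - a - 2 * k - 1) * (x + 2 * b + a + 2 * k + 3) * (x + 1)).

Lemma cert_identity (x : F) :
  a + 1 != 0 -> a + 2 != 0 -> a + 2 * k + 1 != 0 -> a + 2 * k + 2 != 0 ->
  b + k + a + 1 != 0 -> b + k + a + 2 != 0 ->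
  2 * b + a + 2 * k + 1 != 0 -> 2 * b + a + 2 * k + 2 != 0 ->
  x - a - 2 * k - 1 != 0 -> x + 2 * b + a + 2 * k + 3 != 0 -> x + 1 != 0 ->
  quot_succ x - rec_coef * quot_term x = cert (x + 1) * quot_base x - cert x.
Proof.
move=> *; rewrite /quot_succ /quot_term /quot_base /rec_coef /cert.
by field; repeat (apply/andP; split).
Qed.

Lemma cert0 : cert 0 = 0.
Proof. by rewrite /cert; ring. Qed.
End Certificate.

Definition trunc_sum {F : fieldType} (m k : nat) (beta : F) : F :=
  F32trunc (- (2 * m + 1)%:R) (2 + 2 * m)%:R beta
           (- (2 * m + 2 * k + 1)%:R) (2 * beta + (2 * m + 2 * k + 2)%:R) 1 (2 * m + 1).

Definition closed_form {F : fieldType} (m k : nat) (beta : F) : F :=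
  ((k + 1)%:R * (2 * beta + (2 * m + 2 * k + 1)%:R)
     * poch (2 * beta + (2 * k + 1)%:R) (2 * m) * poch (2 + k)%:R (2 * m))
  / ((2 * m + 2 * k + 1)%:R * (beta + (k + 1)%:R)
     * poch (2 * k + 1)%:R (2 * m) * poch (2 + beta + k%:R) (2 * m)).

Section Recurrence.
Context {F : numFieldType} (k b : nat).
Hypothesis k_gt0 : (0 < k)%N.
Local Notation beta := (b%:R : F).

Definition term m n : F :=
  poch (- (2 * m + 1)%:R) n * poch (2 + 2 * m)%:R n * poch beta n
  / (poch (- (2 * m + 2 * k + 1)%:R) n * poch (2 * beta + (2 * m + 2 * k + 2)%:R) n
     * (n`!)%:R).

Definition base m n : F :=
  poch (- (2 * m + 3)%:R) n * poch (2 + 2 * m)%:R n * poch beta n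
  / (poch (- (2 * m + 2 * k + 3)%:R) n.+1 * poch (2 * beta + (2 * m + 2 * k + 4)%:R) n
     * (n`!)%:R).

Lemma term_succ m n : (n < 2 * m + 4)%N ->
  term m.+1 n = quot_succ (2 * m + 1)%:R k%:R n%:R * base m n.
Proof.
move=> n_lt; rewrite /term /base /quot_succ pochS.
have -> : (2 + 2 * m.+1)%:R = (2 + 2 * m)%:R + 2 :> F by ring.
rewrite poch_add2E; last by solve_neq0.
rewrite (_ : 2 * m.+1 + 1 = 2 * m + 3)%N; last lia.
rewrite (_ : 2 * m.+1 + 2 * k + 1 = 2 * m + 2 * k + 3)%N; last lia.
rewrite (_ : 2 * m.+1 + 2 * k + 2 = 2 * m + 2 * k + 4)%N; last lia.
field; solve_neq0.
Qed.

Lemma term_quot m n : (n < 2 * m + 4)%N ->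
  term m n = quot_term (2 * m + 1)%:R k%:R beta n%:R * base m n.
Proof.
move=> n_lt; rewrite /term /base /quot_term pochS.
have -> : (- (2 * m + 1)%:R : F) = - (2 * m + 3)%:R + 2 by ring.
have -> : (- (2 * m + 2 * k + 1)%:R : F) = - (2 * m + 2 * k + 3)%:R + 2 by ring.
have -> : 2 * beta + (2 * m + 2 * k + 4)%:R = 2 * beta + (2 * m + 2 * k + 2)%:R + 2 by ring.
rewrite !poch_add2E; try by solve_neq0.
field; solve_neq0.
Qed.

Lemma base_succ m n : (n < 2 * m + 4)%N ->
  base m n.+1 = quot_base (2 * m + 1)%:R k%:R beta n%:R * base m n.
Proof.
move=> n_lt; rewrite /base /quot_base !pochS factS natrM.
field; solve_neq0.
Qed.

Definition antidiff m n : F := cert (2 * m + 1)%:R k%:R beta n%:R * base m n.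

Lemma term_recurrence m n : (n < 2 * m + 4)%N ->
  term m.+1 n - rec_coef (2 * m + 1)%:R k%:R beta * term m n
  = antidiff m n.+1 - antidiff m n.
Proof.
move=> n_lt; rewrite /antidiff term_succ // term_quot // base_succ // -natr1.
transitivity ((quot_succ (2 * m + 1)%:R k%:R n%:R
   - rec_coef (2 * m + 1)%:R k%:R beta * quot_term (2 * m + 1)%:R k%:R beta n%:R)
   * base m n); first ring.
by rewrite cert_identity; [ring | int_neq0 ..].
Qed.

Lemma term_eq0 m n : (2 * m + 2 <= n)%N -> term m n = 0.
Proof.
by move=> n_ge; rewrite /term (@poch_neg_nat_eq0 _ (2 * m + 1)) ?mul0r //; lia.
Qed.

Lemma antidiff0 m : antidiff m 0 = 0.
Proof. by rewrite /antidiff cert0 mul0r. Qed.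

Lemma antidiff_end m : antidiff m (2 * m + 4) = 0.
Proof.
by rewrite /antidiff /base (@poch_neg_nat_eq0 _ (2 * m + 3)) ?mul0r ?mulr0 //; lia.
Qed.

Lemma trunc_sumE m : trunc_sum m k beta = \sum_(0 <= n < 2 * m + 2) term m n.
Proof.
rewrite big_mkord /trunc_sum /F32trunc (_ : (2 * m + 1).+1 = 2 * m + 2)%N; last lia.
apply: eq_bigr => n _.
by rewrite expr1n mulr1 -mulrA -invfM.
Qed.

Lemma trunc_sum_succ m :
  trunc_sum m.+1 k beta = rec_coef (2 * m + 1)%:R k%:R beta * trunc_sum m k beta.
Proof.
have -> : trunc_sum m k beta = \sum_(0 <= n < 2 * m + 4) term m n.
  rewrite trunc_sumE (_ : 2 * m + 4 = (2 * m + 2).+2)%N; last lia.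
  by rewrite !big_nat_recr //= !term_eq0 ?addr0.
rewrite trunc_sumE (_ : 2 * m.+1 + 2 = 2 * m + 4)%N; last lia.
apply/eqP; rewrite mulr_sumr -subr_eq0 -sumrB; apply/eqP.
rewrite (telescope_sumr_eq (antidiff m)) ?antidiff_end ?antidiff0 ?subrr //.
by move=> n /andP[_ n_lt]; apply: term_recurrence.
Qed.

Lemma closed_form_succ m :
  closed_form m.+1 k beta = rec_coef (2 * m + 1)%:R k%:R beta * closed_form m k beta.
Proof.
rewrite /closed_form /rec_coef (_ : 2 * m.+1 = (2 * m).+2)%N; last lia.
rewrite !pochS; field; solve_neq0.
Qed.

Lemma trunc_sum0 : trunc_sum 0 k beta = closed_form 0 k beta.
Proof.
rewrite trunc_sumE /closed_form /term big_ltn // big_nat1 !pochS !poch0 factS fact0.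
field; solve_neq0.
Qed.

Lemma trunc_sum_nat m : trunc_sum m k beta = closed_form m k beta.
Proof.
elim: m => [|m IH]; first exact: trunc_sum0.
by rewrite trunc_sum_succ closed_form_succ IH.
Qed.
End Recurrence.

Section ClearedIdentity.
Context {F : numFieldType} (m k : nat).
Hypothesis k_gt0 : (0 < k)%N.

Definition lin_poly (c : F) : {poly F} := 2%:P * 'X + c%:P.

Definition tail_poly : {poly F} :=
  ('X + (k + 1)%:R%:P) * poch (2%:P + 'X + k%:R%:P) (2 * m).

Definition denom_poly : {poly F} :=
  poch (lin_poly (2 * m + 2 * k + 2)%:R) (2 * m + 1) * tail_poly.

Definition sum_coef n : F :=
  poch (- (2 * m + 1)%:R) n * poch (2 + 2 * m)%:R n
  / (poch (- (2 * m + 2 * k + 1)%:R) n * (n`!)%:R).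

Definition sum_poly : {poly F} :=
  \sum_(n < (2 * m + 1).+1) (sum_coef n)%:P * poch 'X n
    * poch (lin_poly (2 * m + 2 * k + 2)%:R + n%:R%:P) (2 * m + 1 - n) * tail_poly.

Definition closed_poly : {poly F} :=
  ((k + 1)%:R * poch (2 + k)%:R (2 * m)
   / ((2 * m + 2 * k + 1)%:R * poch (2 * k + 1)%:R (2 * m)))%:P
  * lin_poly (2 * m + 2 * k + 1)%:R * poch (lin_poly (2 * k + 1)%:R) (2 * m)
  * poch (lin_poly (2 * m + 2 * k + 2)%:R) (2 * m + 1).

Lemma horner_lin_poly c x : (lin_poly c).[x] = 2 * x + c.
Proof. by rewrite /lin_poly hornerD hornerCM hornerX hornerC. Qed.

Lemma horner_tail_poly x :
  tail_poly.[x] = (x + (k + 1)%:R) * poch (2 + x + k%:R) (2 * m).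
Proof. by rewrite /tail_poly hornerM horner_poch !hornerD hornerX !hornerC. Qed.

Lemma horner_denom_poly x : denom_poly.[x] =
  poch (2 * x + (2 * m + 2 * k + 2)%:R) (2 * m + 1) * tail_poly.[x].
Proof. by rewrite /denom_poly hornerM horner_poch horner_lin_poly. Qed.

Lemma horner_sum_poly x : denom_poly.[x] != 0 ->
  sum_poly.[x] = denom_poly.[x] * trunc_sum m k x.
Proof.
rewrite horner_denom_poly mulf_eq0 negb_or => /andP[poch_neq0 _].
rewrite horner_sum mulr_sumr; apply: eq_bigr => n _; have n_lt := ltn_ord n.
set y := 2 * x + _.
have poch_split : poch y (2 * m + 1) = poch y n * poch (y + n%:R) (2 * m + 1 - n).
  by rewrite -pochD subnKC.
rewrite poch_split mulf_eq0 negb_or in poch_neq0 *; case/andP: poch_neq0 => pn_neq0 _.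
rewrite !(hornerM, hornerC, horner_poch, hornerD, hornerX, horner_lin_poly) -/y.
rewrite /sum_coef expr1n mulr1; field; solve_neq0.
Qed.

Lemma horner_closed_poly x : denom_poly.[x] != 0 ->
  closed_poly.[x] = denom_poly.[x] * closed_form m k x.
Proof.
rewrite horner_denom_poly horner_tail_poly !mulf_eq0 !negb_or.
case/and3P => _ xk_neq0 poch_neq0; rewrite addn1 -natr1 in xk_neq0.
rewrite /closed_poly !(hornerM, hornerC, horner_poch, horner_lin_poly) /closed_form.
field; solve_neq0.
Qed.

Lemma sum_poly_closed_poly : sum_poly = closed_poly.
Proof.
apply/eqP; rewrite -subr_eq0; apply/eqP/poly_nat_roots_eq0 => b.
have denom_neq0 : denom_poly.[b%:R] != 0.
  by rewrite horner_denom_poly horner_tail_poly; solve_neq0.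
by rewrite hornerD hornerN horner_sum_poly // horner_closed_poly // trunc_sum_nat ?subrr.
Qed.
End ClearedIdentity.

Local Open Scope complex_scope.

Theorem mainTheorem8 (R : realType) (m k : nat) (beta : R[i])
  (hm : (1 <= m)%N) (hk : (1 <= k)%N)
  (hb : notNonPosInt beta)
  (hb2 : notNonPosInt (2 * beta + (2 * m + 2 * k + 2)%:R)) :
  F32trunc (- (2 * m + 1)%:R) (2 + 2 * m)%:R beta
           (- (2 * m + 2 * k + 1)%:R) (2 * beta + (2 * m + 2 * k + 2)%:R)
           1 (2 * m + 1)
  = ((k + 1)%:R * (2 * beta + (2 * m + 2 * k + 1)%:R)
       * poch (2 * beta + (2 * k + 1)%:R) (2 * m) * poch (2 + k)%:R (2 * m))
    / ((2 * m + 2 * k + 1)%:R * (beta + (k + 1)%:R)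
       * poch (2 * k + 1)%:R (2 * m) * poch (2 + beta + k%:R) (2 * m)).
Proof.
have denom_neq0 : (denom_poly m k).[beta] != 0.
  rewrite horner_denom_poly horner_tail_poly !mulf_neq0 ?notNonPosInt_addn //.
    by apply: poch_neq0 => i _; apply: notNonPosInt_addn.
  apply: poch_neq0 => i _.
  have -> : 2 + beta + k%:R + i%:R = beta + (2 + k + i)%:R by ring.
  exact: notNonPosInt_addn.
change (trunc_sum m k beta = closed_form m k beta).
apply: (mulfI denom_neq0).
by rewrite -horner_sum_poly // -horner_closed_poly // sum_poly_closed_poly.
Qed.
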